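(* Let $L$ be a perfectoid field of characteristic $0$ contained in a complete algebraically closed field $C$, and let $\mathcal D_\infty=\{|q|<1\}\subseteq\mathrm{Spa}(L\langle q^{1/p^\infty}\rangle,\mathcal O_L\langle q^{1/p^\infty}\rangle)$. If $f\in\mathcal O(\mathcal D_\infty)$ takes the constant value $a\in L$ at all $(C,\mathcal O_C)$-points of $\mathcal D_\infty$, then $f=a$ in $\mathcal O(\mathcal D_\infty)$.
   Context: $\mathcal O(\mathcal D_\infty)$ consists of series $\sum_{n\in\mathbb Z[1/p]_{\ge0}}a_nq^n$ with $a_n\in L$, $|a_n|r^n\to0$ for all $0\le r<1$, and such that for every $\delta>0$ and every bounded interval $I$ only finitely many $n\in I$ have $|a_n|>\delta$. $(C,\mathcal O_C)$-points of $\mathcal D_\infty$ correspond to compatible systems $(x^{1/p^i})_i$ of $p$-power roots of topologically nilpotent $x\in\mathcal O_C$. (In the paper $L=L_x$ is the field of definition of the Tate curve at a cusp.) *)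

From Stdlib Require Import Rdefinitions Rbasic_fun Rpower.
From HB Require Import structures.
From mathcomp Require Import all_boot all_order all_algebra.

Set Implicit Arguments. Unset Strict Implicit. Unset Printing Implicit Defensive.
Import GRing.Theory Num.Theory.
Local Open Scope ring_scope.

Record nonarch_abs (K : fieldType) := NonArchAbs {
  nabs :> K -> R;
  nabs_ge0 : forall x, Rle R0 (nabs x);
  nabs_eq0 : forall x, nabs x = R0 <-> x = 0;
  nabs_mul : forall x y, nabs (x * y) = Rmult (nabs x) (nabs y);
  nabs_ultra : forall x y, Rle (nabs (x + y)) (Rmax (nabs x) (nabs y))
}.

Definition cauchy_seq (K : fieldType) (v : nonarch_abs K) (u : nat -> K) : Prop :=
  forall eps, Rlt R0 eps -> exists N : nat, forall m n : nat,
    (N <= m)%N -> (N <= n)%N -> Rlt (v (u m - u n)) eps.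

Definition seq_converges (K : fieldType) (v : nonarch_abs K) (u : nat -> K) (l : K) : Prop :=
  forall eps, Rlt R0 eps -> exists N : nat, forall n : nat,
    (N <= n)%N -> Rlt (v (u n - l)) eps.

Definition complete_abs (K : fieldType) (v : nonarch_abs K) : Prop :=
  forall u, cauchy_seq v u -> exists l, seq_converges v u l.

(* Perfectoid field (Scholze): complete for a non-discrete rank one
   valuation, |p| < 1, and Frobenius surjective on O_K / p. *)
Definition perfectoid (p : nat) (K : fieldType) (v : nonarch_abs K) : Prop :=
  [/\ complete_abs v,
      (forall r, Rlt R0 r -> Rlt r R1 -> exists x, Rlt r (v x) /\ Rlt (v x) R1),
      Rlt (v (p%:R)) R1 &
      (forall x, Rle (v x) R1 ->
         exists y, Rle (v y) R1 /\ Rle (v (y ^+ p - x)) (v (p%:R)))].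

Definition int2Z (z : int) : Z :=
  match z with Posz n => Z.of_nat n | Negz n => Z.opp (Z.of_nat n.+1) end.
Definition rat2R (q : rat) : R := Rdiv (IZR (int2Z (numq q))) (IZR (int2Z (denq q))).

Definition idxZp (p : nat) (q : rat) : Prop :=
  0 <= q /\ exists k : nat, denq q = ((p ^ k)%N)%:Z.

(* O(D_infty): coefficient functions a : Q -> L supported on Z[1/p]_{>=0}
   with |a_n| r^n -> 0 (n -> oo) for all 0 < r < 1 (r = 0 is automatic), and
   only finitely many n in any bounded interval with |a_n| > delta. *)
Definition in_OD (p : nat) (L : fieldType) (v : nonarch_abs L) (a : rat -> L) : Prop :=
  [/\ (forall n, ~ idxZp p n -> a n = 0),
      (forall r, Rlt R0 r -> Rlt r R1 -> forall eps, Rlt R0 eps ->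
         exists N : rat, forall n, idxZp p n -> N < n ->
           Rlt (Rmult (v (a n)) (Rpower r (rat2R n))) eps) &
      (forall delta, Rlt R0 delta -> forall lo hi : rat,
         exists s : seq rat, forall n, idxZp p n -> lo <= n -> n <= hi ->
           Rlt delta (v (a n)) -> n \in s)].

(* (C, O_C)-points of D_infty: compatible systems of p-power roots
   (x_i)_i, x_{i+1}^p = x_i, of a topologically nilpotent x_0. *)
Definition is_point (p : nat) (C : fieldType) (w : nonarch_abs C) (xs : nat -> C) : Prop :=
  Rlt (w (xs 0%N)) R1 /\ forall i : nat, xs i.+1 ^+ p = xs i.

(* x^n for n = m / p^k (reduced) : x_k ^ m. *)
Definition ppow (p : nat) (C : fieldType) (xs : nat -> C) (n : rat) : C :=
  xs (logn p `|denq n|%N) ^+ `|numq n|%N.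

Definition has_sum (C : fieldType) (w : nonarch_abs C) (S : rat -> Prop)
    (t : rat -> C) (s : C) : Prop :=
  forall eps, Rlt R0 eps -> exists s0 : seq rat,
    (forall n, n \in s0 -> S n) /\
    forall s1 : seq rat, uniq s1 -> {subset s0 <= s1} -> (forall n, n \in s1 -> S n) ->
      Rlt (w (s - \sum_(n <- s1) t n)) eps.

Definition eval_at (p : nat) (L C : fieldType) (w : nonarch_abs C)
    (iota : {rmorphism L -> C}) (a : rat -> L) (xs : nat -> C) (s : C) : Prop :=
  has_sum w (idxZp p) (fun n => iota (a n) * ppow p xs n) s.

(* Subtracting a reduces the theorem to: a series b in O(D_infty) whose value
   at every point vanishes is zero.  Suppose b_m <> 0 and fix x in L with
   0 < |x| < 1.  As |b_n| |x|^n -> 0 and only finitely many exponents in a bounded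
   range carry large coefficients, the sizes |b_n| |x|^n attain their maximum;
   let n0 be the least exponent where it is attained and c < 1 a bound for the
   ratio of every non-maximal size to the maximum.  Density of |L^x| gives y with
   |y| < 1 and |y|^n0 > c.  At the point given by a tower of p-power roots of xy
   the n-th term has size |b_n| |x|^n |y|^n, so the n0-th term strictly dominates
   all others (the non-maximal ones as |y|^n <= 1, the other maximal ones as
   n > n0), and by the ultrametric inequality the sum cannot vanish. *)

From Stdlib Require Import Reals Lra Classical.
From HB Require Import structures.
From mathcomp Require Import all_boot all_order all_algebra.
From mathcomp Require Import Rstruct.
Set Implicit Arguments. Unset Strict Implicit.
Import Order.TTheory GRing.Theory Num.Theory.

Section RealPower.
Local Open Scope R_scope.

Lemma Rpower_1_l e : Rpower 1 e = 1.
Proof. by rewrite /Rpower ln_1 Rmult_0_r exp_0. Qed.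

Lemma Rpower_le1 t e : 0 < t -> t <= 1 -> 0 <= e -> Rpower t e <= 1.
Proof. by move=> t0 t1 e0; rewrite -(Rpower_1_l e); apply: Rle_Rpower_l. Qed.

Lemma Rpower_lt_decr t e1 e2 :
  0 < t -> t < 1 -> e1 < e2 -> Rpower t e2 < Rpower t e1.
Proof.
move=> t0 t1 he; apply: exp_increasing.
have : ln t < 0 by rewrite -ln_1; apply: ln_increasing.
nra.
Qed.

Lemma Rpower_near1_gt c e : 0 < c -> c < 1 -> 0 <= e ->
  exists t1, 0 < t1 /\ t1 < 1 /\ forall t, t1 < t -> t < 1 -> c < Rpower t e.
Proof.
move=> c0 c1 e0.
have lc : ln c < 0 by rewrite -ln_1; apply: ln_increasing.
have e1 : 0 < e + 1 by lra.
exists (exp (ln c / (e + 1))); split; first exact: exp_pos.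
split.
  rewrite -[X in _ < X]exp_0; apply: exp_increasing.
  exact: Rdiv_neg_pos lc e1.
move=> t ht t1.
have t0 : 0 < t by have := exp_pos (ln c / (e + 1)); lra.
have lt : ln t < 0 by rewrite -ln_1; apply: ln_increasing.
have hl : ln c < (e + 1) * ln t.
  have {}ht : ln c / (e + 1) < ln t.
    by rewrite -(ln_exp (ln c / (e + 1))); apply: ln_increasing => //; apply: exp_pos.
  by rewrite (_ : ln c = (e + 1) * (ln c / (e + 1))); [nra | field; lra].
by rewrite /Rpower -(exp_ln c c0); apply: exp_increasing; nra.
Qed.

End RealPower.

Section Ultrametric.
Variables (K : fieldType) (v : nonarch_abs K).
Local Open Scope ring_scope.

Lemma nabs0 : v 0 = R0.
Proof. exact/nabs_eq0. Qed.

Lemma nabs1 : v 1 = R1.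
Proof.
have v1_neq0 : v 1 <> R0 by move/nabs_eq0/eqP; rewrite oner_eq0.
apply: (Rmult_eq_reg_l (v 1)) => //.
by rewrite -nabs_mul mulr1 Rmult_1_r.
Qed.

Lemma nabsN x : v (- x) = v x.
Proof.
have vN1 : v (-1) = R1.
  have := nabs_mul v (-1) (-1); rewrite mulrNN mulr1 nabs1.
  have := nabs_ge0 v (-1); nra.
by rewrite -mulN1r nabs_mul vN1 Rmult_1_l.
Qed.

Lemma nabsX x n : v (x ^+ n) = pow (v x) n.
Proof. by elim: n => [|n IH]; rewrite ?expr0 ?nabs1 // exprS nabs_mul IH. Qed.

Lemma nabs_gt0 x : x != 0 -> Rlt R0 (v x).
Proof.
move=> x_neq0; case: (Rle_lt_or_eq_dec _ _ (nabs_ge0 v x)) => // /esym/nabs_eq0 x0.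
by rewrite x0 eqxx in x_neq0.
Qed.

Lemma nabsD_eq_l x y : Rlt (v y) (v x) -> v (x + y) = v x.
Proof.
have := nabs_ultra v x y; have := nabs_ultra v (x + y) (- y).
rewrite addrK nabsN /Rmax.
by case: Rle_dec; case: Rle_dec => *; lra.
Qed.

Lemma nabsB_ultra x y : Rle (v (x - y)) (Rmax (v x) (v y)).
Proof. by rewrite -(nabsN y); exact: nabs_ultra. Qed.

Lemma nabs_sum_lt (I : eqType) (s : seq I) (P : pred I) (F : I -> K) T :
  Rlt R0 T -> (forall i, i \in s -> P i -> Rlt (v (F i)) T) ->
  Rlt (v (\sum_(i <- s | P i) F i)) T.
Proof.
move=> T0; elim: s => [|x s IH] H; first by rewrite big_nil nabs0.
have IHs : Rlt (v (\sum_(i <- s | P i) F i)) T.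
  by apply: IH => i hi; apply: H; rewrite in_cons hi orbT.
rewrite big_cons; case Px: (P x) => //.
have Fx : Rlt (v (F x)) T by apply: H; rewrite ?mem_head.
apply: Rle_lt_trans (nabs_ultra _ _ _) _.
by apply: Rmax_lub_lt.
Qed.

End Ultrametric.

Section RatToReal.
Local Open Scope ring_scope.

Lemma IZR_int2Z (z : int) : IZR (int2Z z) = (z%:~R : R).
Proof.
case: z => n /=; first by rewrite -INR_IZR_INZ INRE.
rewrite -[Z.neg _]/(Z.opp (Z.of_nat n.+1)) opp_IZR -INR_IZR_INZ INRE NegzE.
by rewrite mulrNz RoppE.
Qed.

Lemma rat2R_ratr q : rat2R q = ratr q.
Proof. by rewrite /rat2R /ratr !IZR_int2Z RdivE. Qed.

Lemma rat2R_lt q1 q2 : q1 < q2 -> Rlt (rat2R q1) (rat2R q2).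
Proof. by move=> h; rewrite !rat2R_ratr; apply/RltP; rewrite ltr_rat. Qed.

Lemma rat2R_ge0 q : 0 <= q -> Rle R0 (rat2R q).
Proof. by move=> h; rewrite rat2R_ratr; apply/RleP; rewrite ler0q. Qed.

End RatToReal.

Section RootTower.
Variables (p : nat) (C : closedFieldType) (vC : nonarch_abs C).
Hypothesis p_prime : prime p.
Local Open Scope ring_scope.

Lemma exists_proot (c : C) : exists x : C, x ^+ p == c.
Proof.
have p_gt0 := prime_gt0 p_prime.
have [x hx] := @solve_monicpoly C p (fun i => if i == 0%N then c else 0) p_gt0.
exists x; rewrite hx (bigD1 (Ordinal p_gt0)) //= expr0 mulr1 big1 ?addr0 //.
by move=> [[|i] hi] //= _; rewrite mul0r.
Qed.

Definition proot (c : C) : C := xchoose (exists_proot c).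

Lemma prootK c : proot c ^+ p = c.
Proof. exact/eqP/(xchooseP (exists_proot c)). Qed.

Fixpoint root_tower (c : C) (i : nat) : C :=
  if i is i'.+1 then proot (root_tower c i') else c.

Lemma root_tower_point c : Rlt (vC c) R1 -> is_point p vC (root_tower c).
Proof. by move=> c_lt1; split => // i /=; exact: prootK. Qed.

Lemma nabs_root_tower c : Rlt R0 (vC c) ->
  forall k, vC (root_tower c k) = Rpower (vC c) (Rinv (INR (p ^ k)%N)).
Proof.
move=> c_gt0; elim => [|k IH] /=; first by rewrite Rinv_1 Rpower_1.
set x := root_tower c k; set rho := vC (proot x).
have rho_p : pow rho p = vC x by rewrite /rho -nabsX prootK.
have p_gt0 : Rlt R0 (INR p) by apply: lt_0_INR; apply/ssrnat.ltP; exact: prime_gt0.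
have rho_gt0 : Rlt R0 rho.
  have vx_gt0 : Rlt R0 (vC x) by rewrite /x IH; exact: exp_pos.
  apply: nabs_gt0; apply/eqP => rho0; move: vx_gt0.
  by rewrite -(prootK x) rho0 expr0n (gtn_eqF (prime_gt0 p_prime)) /= nabs0; apply: Rlt_irrefl.
have -> : rho = Rpower (pow rho p) (Rinv (INR p)).
  rewrite -Rpower_pow // Rpower_mult Rinv_r ?Rpower_1 //; exact: Rgt_not_eq.
by rewrite rho_p IH Rpower_mult expnSr mult_INR Rinv_mult.
Qed.

Lemma nabs_ppow_root_tower c n : Rlt R0 (vC c) -> idxZp p n ->
  vC (ppow p (root_tower c) n) = Rpower (vC c) (rat2R n).
Proof.
move=> c_gt0 [n_ge0 [k dn]].
rewrite /ppow dn absz_nat pfactorK // nabsX nabs_root_tower //.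
rewrite -Rpower_pow; last exact: exp_pos.
rewrite Rpower_mult /rat2R dn.
have -> : numq n = Posz `|numq n|%N by rewrite gez0_abs // numq_ge0.
by rewrite /= -!INR_IZR_INZ /Rdiv Rmult_comm.
Qed.

End RootTower.

Section FiniteChoices.
Local Open Scope order_scope.

Lemma exists_lex_argmax disp (T : orderType disp) (g : T -> R) (x : T) (s : seq T) :
  exists n0, n0 \in x :: s /\ forall n, n \in x :: s ->
    Rlt (g n) (g n0) \/ (g n = g n0 /\ n0 <= n).
Proof.
elim: s x => [|y s IH] x.
  by exists x; split=> [|n]; rewrite ?mem_seq1 // => /eqP ->; right.
have [n0 [n0_in H]] := IH y.
have in_xys z : z \in y :: s -> z \in x :: y :: s by move=> zin; rewrite in_cons zin orbT.
case: (total_order_T (g x) (g n0)) => [[gx|gx]|gx].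
- exists n0; split; first exact: in_xys.
  by move=> n; rewrite in_cons => /orP [/eqP ->|]; [left | exact: H].
- case: (leP x n0) => [x_le|n0_lt].
    exists x; split=> [|n]; first exact: mem_head.
    rewrite in_cons => /orP [/eqP ->|/H]; first by right.
    by rewrite gx => -[|[-> le_n0]]; [left | right; split=> //; exact: le_trans le_n0].
  exists n0; split=> [|n]; first exact: in_xys.
  by rewrite in_cons => /orP [/eqP ->|]; [right; split=> //; exact: ltW | exact: H].
- exists x; split=> [|n]; first exact: mem_head.
  rewrite in_cons => /orP [/eqP ->|/H [h|[-> _]]]; [by right | left..] => //.
  exact: Rlt_trans gx.
Qed.

End FiniteChoices.

Section RatioBound.
Local Open Scope R_scope.

Lemma exists_ratio_bound (I : eqType) (g : I -> R) (s : seq I) M c0 :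
  0 < M -> c0 < 1 ->
  exists c, c0 <= c /\ c < 1 /\ forall n, n \in s -> g n < M -> g n <= c * M.
Proof.
move=> M_gt0 c0_lt1; elim: s => [|x s [c [c0_le [c_lt1 H]]]].
  by exists c0; split; [lra | split].
have gxM : g x / M * M = g x by field; lra.
case: (Rlt_le_dec (g x) M) => gx.
  exists (Rmax c (g x / M)); split; first exact: Rle_trans (Rmax_l _ _).
  split.
    apply: Rmax_lub_lt => //; apply: (Rmult_lt_reg_r M) => //; lra.
  move=> n; rewrite in_cons => /orP [/eqP -> _|/H hn /hn].
    by rewrite -[X in X <= _]gxM; apply: Rmult_le_compat_r; [lra | exact: Rmax_r].
  move=> gn; apply: Rle_trans gn _; apply: Rmult_le_compat_r; [lra | exact: Rmax_l].
exists c; split=> //; split=> // n; rewrite in_cons => /orP [/eqP -> /=|]; first lra.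
exact: H.
Qed.

End RatioBound.

Section HasSum.
Variables (K : fieldType) (w : nonarch_abs K) (S : rat -> Prop).
Local Open Scope ring_scope.

Lemma has_sum_ext (t1 t2 : rat -> K) s :
  (forall n, t1 n = t2 n) -> has_sum w S t1 s -> has_sum w S t2 s.
Proof.
move=> t12 h eps eps_gt0; have [s0 [s0S Hs0]] := h eps eps_gt0.
exists s0; split=> // s1 s1u s01 s1S.
by under eq_bigr do rewrite -t12; exact: Hs0.
Qed.

Lemma has_sumB (t1 t2 : rat -> K) s1 s2 :
  has_sum w S t1 s1 -> has_sum w S t2 s2 ->
  has_sum w S (fun n => t1 n - t2 n) (s1 - s2).
Proof.
move=> h1 h2 eps eps_gt0.
have [u1 [u1S H1]] := h1 eps eps_gt0; have [u2 [u2S H2]] := h2 eps eps_gt0.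
exists (u1 ++ u2); split=> [n|s s_uniq sub sS].
  by rewrite mem_cat => /orP []; [exact: u1S | exact: u2S].
have [sub1 sub2] : {subset u1 <= s} /\ {subset u2 <= s}.
  by split=> n n_in; apply: sub; rewrite mem_cat n_in ?orbT.
rewrite sumrB (_ : _ - _ = (s1 - \sum_(n <- s) t1 n) - (s2 - \sum_(n <- s) t2 n)); last first.
  by rewrite !opprB addrACA [RHS]addrACA (addrC (- \sum_(n <- s) t1 n)).
apply: Rle_lt_trans (nabs_ultra _ _ _) _; apply: Rmax_lub_lt; first exact: H1.
by rewrite nabsN; exact: H2.
Qed.

Lemma has_sum_supp1 (t : rat -> K) n0 :
  S n0 -> (forall n, n != n0 -> t n = 0) -> has_sum w S t (t n0).
Proof.
move=> Sn0 t0 eps eps_gt0; exists [:: n0]; split=> [n|s s_uniq sub _].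
  by rewrite mem_seq1 => /eqP ->.
by rewrite (bigD1_seq n0) ?sub ?mem_head //= big1 ?addr0 ?subrr ?nabs0.
Qed.

(* By the ultrametric inequality every large enough partial sum has the size
   of the dominant term. *)
Lemma has_sum_dominant_neq0 (t : rat -> K) s n0 :
  has_sum w S t s -> S n0 -> Rlt R0 (w (t n0)) ->
  (forall n, S n -> n != n0 -> Rlt (w (t n)) (w (t n0))) -> s != 0.
Proof.
move=> hs Sn0 tn0 dom; apply/eqP => s0.
have [u [uS Hu]] := hs _ tn0.
set u' := undup (n0 :: u).
have u'S n : n \in u' -> S n by rewrite mem_undup in_cons => /orP [/eqP ->|/uS].
have u_sub : {subset u <= u'} by move=> n nu; rewrite mem_undup in_cons nu orbT.
have := Hu u' (undup_uniq _) u_sub u'S.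
rewrite s0 sub0r nabsN (bigD1_seq n0) ?mem_undup ?mem_head ?undup_uniq //=.
rewrite nabsD_eq_l => [/Rlt_irrefl //|].
by apply: nabs_sum_lt => [|n /u'S]; [exact: tn0 | exact: dom].
Qed.

End HasSum.

Section SeriesOnD.
Variables (p : nat) (L : fieldType) (v : nonarch_abs L).
Local Open Scope ring_scope.

Definition cst_series (a : L) (n : rat) : L := if n == 0 then a else 0.

Lemma idxZp0 : idxZp p 0.
Proof. by split=> //; exists 0%N. Qed.

Lemma in_OD_cst a : in_OD p v (cst_series a).
Proof.
split=> [n|r _ _ eps eps_gt0|delta delta_gt0 lo hi].
- by rewrite /cst_series; case: eqP => // -> /(_ idxZp0).
- exists 0 => n _ n_gt0; rewrite /cst_series gt_eqF // nabs0 Rmult_0_l //.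
- exists [:: 0] => n _ _ _; rewrite /cst_series mem_seq1.
  by case: eqP => // _; rewrite nabs0 => ?; lra.
Qed.

Lemma in_OD_sub f g : in_OD p v f -> in_OD p v g -> in_OD p v (fun n => f n - g n).
Proof.
move=> [f_supp f_dec f_fin] [g_supp g_dec g_fin].
split=> [n n_idx|r r_gt0 r_lt1 eps eps_gt0|delta delta_gt0 lo hi].
- by rewrite f_supp ?g_supp ?subr0.
- have [Nf Hf] := f_dec r r_gt0 r_lt1 eps eps_gt0.
  have [Ng Hg] := g_dec r r_gt0 r_lt1 eps eps_gt0.
  exists (Num.max Nf Ng) => n n_idx; rewrite gt_max => /andP [nf ng].
  apply: Rle_lt_trans (Rmult_le_compat_r _ _ _ _ (nabsB_ultra _ _ _)) _.
    by left; exact: exp_pos.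
  by rewrite /Rmax; case: Rle_dec => _; [exact: Hg | exact: Hf].
- have [sf Hf] := f_fin delta delta_gt0 lo hi; have [sg Hg] := g_fin delta delta_gt0 lo hi.
  exists (sf ++ sg) => n n_idx lo_n n_hi fg_big; rewrite mem_cat.
  case: (Rlt_le_dec delta (v (f n))) => [/(Hf n n_idx lo_n n_hi) -> //|vf].
  case: (Rlt_le_dec delta (v (g n))) => [/(Hg n n_idx lo_n n_hi) ->|vg]; first by rewrite orbT.
  have := Rle_trans _ _ _ (nabsB_ultra v (f n) (g n)) (Rmax_lub _ _ _ vf vg).
  by move/Rle_not_lt.
Qed.

End SeriesOnD.

Section DominantTerm.
Variables (p : nat) (L : fieldType) (v : nonarch_abs L).
Local Open Scope ring_scope.

Definition term_size (b : rat -> L) (r : R) (n : rat) : R :=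
  Rmult (v (b n)) (Rpower r (rat2R n)).

(* The sizes at least half of [term_size b r m] occur at exponents in a finite
   set [m :: s]; [n0] is the least exponent of maximal size there, and [c] bounds
   the ratio of the smaller sizes in [m :: s] (and of the tail, by 1/2). *)
Lemma in_OD_dominant_exponent b r m :
  in_OD p v b -> Rlt R0 r -> Rlt r R1 -> b m != 0 ->
  exists n0 c, [/\ idxZp p n0, Rlt R0 (term_size b r n0), Rlt R0 c, Rlt c R1 &
    forall n, idxZp p n -> n != n0 ->
      Rle (term_size b r n) (Rmult c (term_size b r n0)) \/
      (term_size b r n = term_size b r n0 /\ n0 < n)].
Proof.
move=> [b_supp b_dec b_fin] r_gt0 r_lt1 bm.
set g := term_size b r.
have g_ge0 n : Rle R0 (g n).
  by apply: Rmult_le_pos; [exact: nabs_ge0 | left; exact: exp_pos].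
have gm_gt0 : Rlt R0 (g m) by apply: Rmult_lt_0_compat; [exact: nabs_gt0 | exact: exp_pos].
have g_le n : idxZp p n -> Rle (g n) (v (b n)).
  move=> [n_ge0 _]; rewrite /g /term_size -[X in Rle _ X]Rmult_1_r.
  apply: Rmult_le_compat_l; first exact: nabs_ge0.
  by apply: Rpower_le1; [| left | exact: rat2R_ge0].
set eps := Rdiv (g m) 2.
have eps_gt0 : Rlt R0 eps by rewrite /eps; lra.
have [N HN] := b_dec r r_gt0 r_lt1 eps eps_gt0.
have [s Hs] := b_fin eps eps_gt0 0 N.
have small n : idxZp p n -> n \notin s -> Rle (g n) eps.
  move=> n_idx ns; case: (ltrP N n) => [/(HN n n_idx)/Rlt_le //|n_le].
  case: (Rlt_le_dec eps (v (b n))) => [/(Hs n n_idx (proj1 n_idx) n_le)|vb].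
    by rewrite (negbTE ns).
  exact: Rle_trans (g_le n n_idx) vb.
have [n0 [n0_in n0_max]] := exists_lex_argmax g m s.
have gmn0 : Rle (g m) (g n0).
  by case: (n0_max m (mem_head _ _)) => [/Rlt_le|[-> _]] //; right.
have gn0_gt0 : Rlt R0 (g n0) by exact: Rlt_le_trans gmn0.
have n0_idx : idxZp p n0.
  case: (classic (idxZp p n0)) => // /b_supp bn0.
  by move: gn0_gt0; rewrite /g /term_size bn0 nabs0 Rmult_0_l => /Rlt_irrefl.
have half_lt1 : Rlt (/2) R1 by lra.
have [c [c_ge [c_lt1 c_bound]]] := exists_ratio_bound g (m :: s) gn0_gt0 half_lt1.
exists n0, c; split=> //; first lra.
move=> n n_idx nn0; case: (boolP (n \in m :: s)) => [n_in|].
  case: (n0_max n n_in) => [/(c_bound n n_in)|[gn n0_le]]; first by left.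
  by right; split=> //; rewrite lt_neqAle eq_sym nn0.
rewrite in_cons negb_or => /andP [_ /(small n n_idx) gn].
left; rewrite /eps in gn; nra.
Qed.

Lemma dominant_term_size_scaled b r n n0 c t :
  Rlt R0 (term_size b r n0) -> Rlt R0 t -> Rlt t R1 -> Rlt c (Rpower t (rat2R n0)) ->
  idxZp p n ->
  Rle (term_size b r n) (Rmult c (term_size b r n0)) \/
  (term_size b r n = term_size b r n0 /\ n0 < n) ->
  Rlt (Rmult (term_size b r n) (Rpower t (rat2R n)))
      (Rmult (term_size b r n0) (Rpower t (rat2R n0))).
Proof.
move=> g0_gt0 t_gt0 t_lt1 c_lt [n_ge0 _] [gn_le|[-> /rat2R_lt n0n]].
  have g_ge0 : Rle R0 (term_size b r n).
    by apply: Rmult_le_pos; [exact: nabs_ge0 | left; exact: exp_pos].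
  have tn_le1 := Rpower_le1 t_gt0 (Rlt_le _ _ t_lt1) (rat2R_ge0 n_ge0).
  nra.
exact/Rmult_lt_compat_l/Rpower_lt_decr.
Qed.

End DominantTerm.

Local Open Scope ring_scope.

Lemma in_OD_eq0_of_vanishing (p : nat) (L : fieldType) (vL : nonarch_abs L)
    (C : closedFieldType) (vC : nonarch_abs C) (iota : {rmorphism L -> C})
    (b : rat -> L) :
  prime p -> perfectoid p vL -> (forall x, vC (iota x) = vL x) -> in_OD p vL b ->
  (forall xs, is_point p vC xs ->
     has_sum vC (idxZp p) (fun n => iota (b n) * ppow p xs n) 0) ->
  forall n, b n = 0.
Proof.
move=> p_prime [_ dense _ _] iota_abs bOD vanish m; apply/eqP/negP => /negP bm.
have [||x [x_gt x_lt1]] := dense (Rinv 2); [lra | lra |].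
have x_gt0 : Rlt R0 (vL x) by lra.
have [n0 [c [n0_idx gn0_gt0 c_gt0 c_lt1 dom]]] :=
  in_OD_dominant_exponent bOD x_gt0 x_lt1 bm.
have [t1 [t1_gt0 [t1_lt1 near1]]] := Rpower_near1_gt c_gt0 c_lt1 (rat2R_ge0 (proj1 n0_idx)).
have [y [y_gt y_lt1]] := dense t1 t1_gt0 t1_lt1.
have y_gt0 : Rlt R0 (vL y) by lra.
set z := iota (x * y).
have vz : vC z = Rmult (vL x) (vL y) by rewrite /z iota_abs nabs_mul.
have z_gt0 : Rlt R0 (vC z) by rewrite vz; exact: Rmult_lt_0_compat.
have z_lt1 : Rlt (vC z) R1 by rewrite vz; nra.
have term_abs n : idxZp p n ->
    vC (iota (b n) * ppow p (root_tower p_prime z) n) =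
    Rmult (term_size vL b (vL x) n) (Rpower (vL y) (rat2R n)).
  move=> n_idx; rewrite nabs_mul iota_abs nabs_ppow_root_tower // vz.
  by rewrite -Rpower_mult_distr // /term_size Rmult_assoc.
suff : (0 : C) != 0 by rewrite eqxx.
apply: (has_sum_dominant_neq0 (vanish _ (root_tower_point p_prime z_lt1)) n0_idx).
  by rewrite term_abs //; apply: Rmult_lt_0_compat => //; exact: exp_pos.
move=> n n_idx nn0; rewrite !term_abs //.
by apply: (dominant_term_size_scaled (p := p) (c := c)) => //; [exact: near1 | exact: dom].
Qed.

Theorem mainTheorem15 (p : nat) (L : fieldType) (vL : nonarch_abs L)
    (C : closedFieldType) (vC : nonarch_abs C) (iota : {rmorphism L -> C})
    (f : rat -> L) (a : L) :
  prime p ->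
  perfectoid p vL ->
  (forall n : nat, (n.+1)%:R != 0 :> L) ->
  complete_abs vC ->
  (forall x, vC (iota x) = vL x) ->
  in_OD p vL f ->
  (forall xs, is_point p vC xs -> eval_at p vC iota f xs (iota a)) ->
  forall n : rat, f n = (if n == 0 then a else 0).
Proof.
move=> p_prime perf _ _ iota_abs fOD f_val n.
suff /(_ n)/eqP : forall n, f n - cst_series a n = 0 by rewrite subr_eq0 => /eqP.
apply: (in_OD_eq0_of_vanishing p_prime perf iota_abs (in_OD_sub fOD (in_OD_cst p vL a))).
move=> xs xs_pt; rewrite -(subrr (iota a)).
have cst_val : has_sum vC (idxZp p) (fun n => iota (cst_series a n) * ppow p xs n) (iota a).
  have := has_sum_supp1 vC (t := fun n => iota (cst_series a n) * ppow p xs n) (idxZp0 p).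
  rewrite /cst_series eqxx /ppow expr0 mulr1; apply=> m /negbTE ->.
  by rewrite rmorph0 mul0r.
apply: has_sum_ext (has_sumB (f_val xs xs_pt) cst_val) => m.
by rewrite rmorphB mulrBl.
Qed.
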